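(* For every real $x>1$, $$\mathcal L\left(\frac{1}{\left(x+\sqrt{x^2-1}\right)^2}\right)=\sum_{m=1}^{\infty}\mathcal L\left(\frac{1}{U_m(x)^2}\right),$$ where $U_m$ is the $m$-th Chebyshev polynomial of the second kind.
   Context: $\mathcal L$ is the Rogers dilogarithm: for real $z\le1$, $\mathcal L(z)=\mathrm{Li}_2(z)+\tfrac12\log|z|\log(1-z)$, where $\mathrm{Li}_2(z)=\sum_{m\ge1}z^m/m^2$. The Chebyshev polynomials of the second kind $U_m\in\mathbb Z[x]$ are determined by $U_m(\cos\theta)=\sin((m+1)\theta)/\sin\theta$. *)

From Stdlib Require Import Reals ClassicalEpsilon.
Open Scope R_scope.

(* Li_2(z) = sum_{m>=1} z^m / m^2, taken as the sum of the (convergent for |z|<=1)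
   series; chosen via epsilon (the value is unique whenever the series converges). *)
Definition Li2 (z : R) : R :=
  epsilon (inhabits 0)
    (fun l => infinite_sum (fun n => z ^ (S n) / (INR (S n)) ^ 2) l).

Definition rogersL (z : R) : R :=
  Li2 z + / 2 * ln (Rabs z) * ln (1 - z).

(* Chebyshev polynomials of the second kind, evaluated at x:
   U_0 = 1, U_1 = 2x, U_{m+2} = 2x U_{m+1} - U_m. *)
Fixpoint chebU_pair (m : nat) (x : R) : R * R :=
  match m with
  | O => (1, 2 * x)
  | S k => let p := chebU_pair k x in (snd p, 2 * x * snd p - fst p)
  end.

Definition chebU (m : nat) (x : R) : R := fst (chebU_pair m x).

(* The Rogers dilogarithm L has derivative -(ln(1-z)/z + ln z/(1-z))/2 on (0, 1); this makes
   the defect of Abel's five-term relation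
     L(x) + L(y) = L(xy) + L(x(1-y)/(1-xy)) + L(y(1-x)/(1-xy))
   constant in x, and it vanishes in the limit x -> 0, where L(x) -> 0.  For 0 < r < 1 put
   A_n = (1-r)/(1-r^(n+2)) and B_n = r^(n+1) A_n.  The five-term relation at (A_n, B_n) reads
     L(A_n) + L(B_n) = L(r^(n+1) A_n^2) + L(A_(n+1)) + L(B_(n+1)),
   so the series telescopes: L(A_0) + L(B_0) = L(r) + L(1-r) by the reflection formula, and
   L(A_n) + L(B_n) -> L(1-r).  Finally, with q = x - sqrt(x^2-1) and r = q^2, one has
   U_m(x) = (q^-(m+1) - q^(m+1))/(q^-1 - q), hence 1/U_(n+1)(x)^2 = r^(n+1) A_n^2, while
   1/(x + sqrt(x^2-1))^2 = r. *)

From Coquelicot Require Import Coquelicot.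
From Stdlib Require Import Reals Lra ClassicalEpsilon FunctionalExtensionality.
Open Scope R_scope.

(* [neglog1m_coef n = 1 / n] and [dilog_coef n = 1 / n ^ 2] (both [0] at [n = 0]): the Taylor
   coefficients of [- ln (1 - z)] and of [Li2 z]. *)
Definition neglog1m_coef : nat -> R := PS_Int (fun _ => 1).
Definition dilog_coef : nat -> R := PS_Int (PS_decr_1 neglog1m_coef).

Lemma CV_radius_const_1 : CV_radius (fun _ => 1) = 1.
Proof.
  rewrite (CV_radius_finite_DAlembert _ 1); try (intros; lra).
  - f_equal; apply Rinv_1.
  - apply is_lim_seq_ext with (u := fun _ => 1); [|apply is_lim_seq_const].
    intros n; rewrite Rdiv_1_r; symmetry; apply Rabs_R1.
Qed.

Lemma CV_radius_neglog1m_coef : CV_radius neglog1m_coef = 1.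
Proof. unfold neglog1m_coef; now rewrite CV_radius_Int, CV_radius_const_1. Qed.

Lemma CV_radius_dilog_coef : CV_radius dilog_coef = 1.
Proof.
  unfold dilog_coef; now rewrite CV_radius_Int, CV_radius_decr_1, CV_radius_neglog1m_coef.
Qed.

Lemma pow_gt0_le1 (r : R) (n : nat) : 0 < r <= 1 -> 0 < r ^ n <= 1.
Proof. intros Hr; induction n; simpl; nra. Qed.

Lemma continuity_pt_of_ex_derive (f : R -> R) (x : R) : ex_derive f x -> continuity_pt f x.
Proof.
  intros Hf; apply continuity_pt_filterlim.
  now apply (@ex_derive_continuous R_AbsRing R_NormedModule).
Qed.

Lemma is_lim_seq_comp_ex_derive (f : R -> R) (u : nat -> R) (l : R) :
  ex_derive f l -> is_lim_seq u l -> is_lim_seq (fun n => f (u n)) (f l).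
Proof. intros Hf; apply is_lim_seq_continuous, continuity_pt_of_ex_derive, Hf. Qed.

Lemma is_derive_0_eq_on_interval (f : R -> R) (lo hi : R) :
  (forall t, lo < t < hi -> is_derive f t 0) ->
  forall a b, lo < a < hi -> lo < b < hi -> f a = f b.
Proof.
  intros Hf a b Ha Hb.
  assert (Hin : forall t, Rmin a b <= t <= Rmax a b -> lo < t < hi).
  { intros t Ht; split.
    - apply Rlt_le_trans with (Rmin a b); [apply Rmin_glb_lt|]; lra.
    - apply Rle_lt_trans with (Rmax a b); [|apply Rmax_lub_lt]; lra. }
  destruct (MVT_gen f a b (fun _ => 0)) as [c [_ Hc]].
  - intros t Ht; apply Hf, Hin; lra.
  - intros t Ht; apply continuity_pt_of_ex_derive; exists 0; apply Hf, Hin, Ht.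
  - lra.
Qed.

Lemma Li2_PSeries (z : R) : Rabs z < 1 -> Li2 z = PSeries dilog_coef z.
Proof.
  intros Hz.
  assert (Hin : Rbar_lt (Rabs z) (CV_radius dilog_coef)) by now rewrite CV_radius_dilog_coef.
  assert (Hsum : is_series (fun n => z ^ S n / INR (S n) ^ 2) (PSeries dilog_coef z)).
  { pose proof (PSeries_correct _ _ (CV_radius_inside _ _ Hin)) as Hp.
    apply (is_series_ext (fun n => scal (pow_n z (S n)) (dilog_coef (S n)))).
    { intros n; rewrite pow_n_pow; unfold dilog_coef, neglog1m_coef, PS_Int, PS_decr_1.
      change (z ^ S n * (1 / INR (S n) / INR (S n)) = z ^ S n / INR (S n) ^ 2).
      field; apply not_0_INR; discriminate. }
    apply (@is_series_incr_1 R_AbsRing R_NormedModule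
             (fun k => scal (pow_n z k) (dilog_coef k))).
    replace (plus _ _) with (PSeries dilog_coef z); [exact Hp|].
    change (PSeries dilog_coef z = PSeries dilog_coef z + 1 * 0); ring. }
  unfold Li2; apply (uniqueness_sum (fun n => z ^ S n / INR (S n) ^ 2));
    [apply epsilon_spec; exists (PSeries dilog_coef z)|]; now apply is_series_Reals.
Qed.

Lemma is_derive_PSeries_Int (a : nat -> R) (z : R) :
  Rbar_lt (Rabs z) (CV_radius a) -> is_derive (PSeries (PS_Int a)) z (PSeries a z).
Proof.
  intros Hz.
  assert (Hd : PSeries (PS_derive (PS_Int a)) z = PSeries a z).
  { apply PSeries_ext; intros n; unfold PS_derive, PS_Int.
    field; apply not_0_INR; discriminate. }
  rewrite <- Hd; apply is_derive_PSeries; now rewrite CV_radius_Int.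
Qed.

Lemma PSeries_neglog1m (z : R) : Rabs z < 1 -> PSeries neglog1m_coef z = - ln (1 - z).
Proof.
  intros Hz.
  assert (Hconst : forall t, -1 < t < 1 ->
            is_derive (fun t => PSeries neglog1m_coef t + ln (1 - t)) t 0).
  { intros t Ht.
    assert (Hgeom : PSeries (fun _ => 1) t = / (1 - t)).
    { apply is_series_unique, (is_series_ext (fun n => t ^ n)).
      - intros n; rewrite <- pow_n_pow; symmetry; apply Rmult_1_l.
      - apply is_series_geom; apply Rabs_def1; lra. }
    replace 0 with (/ (1 - t) + (-1) * / (1 - t)) by ring.
    apply (is_derive_plus (PSeries neglog1m_coef)).
    - rewrite <- Hgeom; apply is_derive_PSeries_Int.
      rewrite CV_radius_const_1; apply Rabs_def1; lra.
    - apply (is_derive_comp ln (fun t => 1 - t)); [apply is_derive_ln; lra|].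
      auto_derive; auto; ring. }
  assert (Hz' : -1 < z < 1) by (apply Rabs_def2 in Hz; lra).
  pose proof (is_derive_0_eq_on_interval _ (-1) 1 Hconst z 0 Hz' ltac:(lra)) as E.
  simpl in E; rewrite (PSeries_0 neglog1m_coef), Rminus_0_r, ln_1 in E.
  simpl in E; lra.
Qed.

Lemma is_derive_PSeries_dilog (z : R) : Rabs z < 1 -> z <> 0 ->
  is_derive (PSeries dilog_coef) z (- ln (1 - z) / z).
Proof.
  intros Hz Hz0.
  replace (- ln (1 - z) / z) with (PSeries (PS_decr_1 neglog1m_coef) z).
  - apply is_derive_PSeries_Int.
    now rewrite CV_radius_decr_1, CV_radius_neglog1m_coef.
  - rewrite <- PSeries_neglog1m, (PSeries_decr_1_aux neglog1m_coef z) by auto.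
    field; auto.
Qed.

(* A model of [rogersL] on (0, 1) that can be differentiated, with [Li2] replaced by its power
   series; it also extends [rogersL] continuously to [0]. *)
Definition rogersL_ps (z : R) : R := PSeries dilog_coef z + / 2 * ln z * ln (1 - z).

Definition rogersL_derive (z : R) : R := - / 2 * (ln (1 - z) / z + ln z / (1 - z)).

Lemma rogersL_ps_eq (z : R) : 0 < z < 1 -> rogersL z = rogersL_ps z.
Proof.
  intros Hz; unfold rogersL, rogersL_ps.
  rewrite Li2_PSeries, Rabs_pos_eq; try lra.
  rewrite Rabs_pos_eq; lra.
Qed.

Lemma is_derive_rogersL_ps (z : R) : 0 < z < 1 -> is_derive rogersL_ps z (rogersL_derive z).
Proof.
  intros Hz.
  replace (rogersL_derive z)
    with (- ln (1 - z) / z + / 2 * (/ z * ln (1 - z) - ln z / (1 - z))).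
  - apply (is_derive_plus (PSeries dilog_coef)).
    + apply is_derive_PSeries_dilog; [rewrite Rabs_pos_eq|]; lra.
    + auto_derive; [lra | unfold Rminus; field; lra].
  - unfold rogersL_derive; field; lra.
Qed.

Lemma continuity_pt_rogersL_ps (z : R) : 0 < z < 1 -> continuity_pt rogersL_ps z.
Proof.
  intros Hz; apply continuity_pt_of_ex_derive.
  exists (rogersL_derive z); now apply is_derive_rogersL_ps.
Qed.

Lemma ln_le_sub_1 (t : R) : 0 < t -> ln t <= t - 1.
Proof.
  intros Ht; rewrite <- (ln_exp (t - 1)); apply ln_le; auto.
  pose proof (exp_ineq1_le (t - 1)); lra.
Qed.

Lemma Rabs_ln_mul_ln_1m_le (z : R) : 0 < z <= / 2 -> Rabs (ln z * ln (1 - z)) <= 4 * sqrt z.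
Proof.
  intros Hz; set (s := sqrt z).
  assert (Hs : 0 < s) by (apply sqrt_lt_R0; lra).
  assert (Hss : s * s = z) by (apply sqrt_sqrt; lra).
  assert (Hs1 : s <= 1) by nra.
  assert (Hln_z : ln z = 2 * ln s) by (rewrite <- Hss, ln_mult; lra).
  assert (Hln_s : - ln s * s <= 1).
  { assert (- ln s <= / s - 1)
      by (rewrite <- ln_Rinv by lra; apply ln_le_sub_1, Rinv_0_lt_compat, Hs).
    apply Rmult_le_reg_r with (/ s); [apply Rinv_0_lt_compat; lra|].
    rewrite Rmult_assoc, Rinv_r; lra. }
  assert (Hln_1m : - ln (1 - z) <= 2 * z).
  { rewrite <- ln_Rinv by lra.
    apply Rle_trans with (/ (1 - z) - 1); [apply ln_le_sub_1, Rinv_0_lt_compat; lra|].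
    apply Rmult_le_reg_r with (1 - z); [lra|].
    rewrite Rmult_minus_distr_r, Rinv_l; nra. }
  assert (ln s <= 0) by (rewrite <- ln_1; apply ln_le; lra).
  assert (ln (1 - z) <= 0) by (rewrite <- ln_1; apply ln_le; lra).
  rewrite Rabs_pos_eq, Hln_z by nra.
  rewrite <- Hss in *; nra.
Qed.

Lemma is_lim_seq_rogersL_ps_0 (u : nat -> R) :
  (forall n, 0 < u n <= / 2) -> is_lim_seq u 0 -> is_lim_seq (fun n => rogersL_ps (u n)) 0.
Proof.
  intros Hu Hlim; unfold rogersL_ps.
  replace (Finite 0) with (Finite (PSeries dilog_coef 0 + / 2 * 0))
    by (rewrite (PSeries_0 dilog_coef); simpl; f_equal; ring).
  apply is_lim_seq_plus'.
  - apply is_lim_seq_continuous; auto.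
    apply PSeries_continuity; rewrite CV_radius_dilog_coef, Rabs_R0; simpl; lra.
  - apply is_lim_seq_ext with (u := fun n => / 2 * (ln (u n) * ln (1 - u n)));
      [intros n; ring|].
    apply (is_lim_seq_scal_l _ (/ 2) 0), is_lim_seq_abs_0.
    apply is_lim_seq_le_le with (u := fun _ => 0) (w := fun n => 4 * sqrt (u n)).
    + intros n; split; [apply Rabs_pos | apply Rabs_ln_mul_ln_1m_le, Hu].
    + apply is_lim_seq_const.
    + replace (Finite 0) with (Finite (4 * sqrt 0)) by (rewrite sqrt_0; f_equal; ring).
      apply (is_lim_seq_scal_l _ 4 (sqrt 0)), is_lim_seq_continuous; auto.
      apply continuity_pt_sqrt; lra.
Qed.

Lemma is_derive_rogersL_ps_comp (g : R -> R) (t dg : R) :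
  0 < g t < 1 -> is_derive g t dg ->
  is_derive (fun s => rogersL_ps (g s)) t (dg * rogersL_derive (g t)).
Proof.
  intros Hg Hdg; apply (is_derive_comp rogersL_ps g); auto.
  now apply is_derive_rogersL_ps.
Qed.

Lemma rogersL_derive_five_term (x y : R) : 0 < x < 1 -> 0 < y < 1 ->
  rogersL_derive x - y * rogersL_derive (x * y)
  - (1 - y) / (1 - x * y) ^ 2 * rogersL_derive (x * (1 - y) / (1 - x * y))
  + y * (1 - y) / (1 - x * y) ^ 2 * rogersL_derive (y * (1 - x) / (1 - x * y)) = 0.
Proof.
  intros Hx Hy.
  assert (0 < x * y < 1) by nra.
  unfold rogersL_derive.
  replace (1 - x * (1 - y) / (1 - x * y)) with ((1 - x) / (1 - x * y)) by (field; lra).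
  replace (1 - y * (1 - x) / (1 - x * y)) with ((1 - y) / (1 - x * y)) by (field; lra).
  rewrite !ln_div, !ln_mult by nra.
  field; repeat split; nra.
Qed.

Definition five_term_defect (x y : R) : R :=
  rogersL_ps x + rogersL_ps y - rogersL_ps (x * y)
  - rogersL_ps (x * (1 - y) / (1 - x * y)) - rogersL_ps (y * (1 - x) / (1 - x * y)).

Lemma five_term_args_01 (x y : R) : 0 < x < 1 -> 0 < y < 1 ->
  0 < x * (1 - y) / (1 - x * y) < 1 /\ 0 < y * (1 - x) / (1 - x * y) < 1.
Proof.
  intros Hx Hy; assert (0 < 1 - x * y) by nra.
  split; split; try (apply Rdiv_lt_0_compat; nra);
    apply Rmult_lt_reg_r with (1 - x * y); auto;
    unfold Rdiv; rewrite Rmult_assoc, Rinv_l; nra.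
Qed.

Lemma is_derive_five_term_defect (x y : R) : 0 < x < 1 -> 0 < y < 1 ->
  is_derive (fun t => five_term_defect t y) x 0.
Proof.
  intros Hx Hy; assert (0 < 1 - x * y) by nra.
  destruct (five_term_args_01 x y Hx Hy) as [Hu Hv].
  set (u := fun t => t * (1 - y) / (1 - t * y)).
  set (v := fun t => y * (1 - t) / (1 - t * y)).
  assert (Du : is_derive u x ((1 - y) / (1 - x * y) ^ 2))
    by (unfold u; auto_derive; [lra | field; lra]).
  assert (Dv : is_derive v x (- (y * (1 - y)) / (1 - x * y) ^ 2))
    by (unfold v; auto_derive; [lra | field; lra]).
  assert (Dm : is_derive (fun t => t * y) x y) by (auto_derive; auto; ring).
  replace 0 with (rogersL_derive x + 0 - y * rogersL_derive (x * y)
                  - (1 - y) / (1 - x * y) ^ 2 * rogersL_derive (u x)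
                  - - (y * (1 - y)) / (1 - x * y) ^ 2 * rogersL_derive (v x))
    by (pose proof (rogersL_derive_five_term x y Hx Hy); unfold u, v, Rdiv in *; lra).
  apply (is_derive_minus
           (fun t => rogersL_ps t + rogersL_ps y - rogersL_ps (t * y) - rogersL_ps (u t))
           (fun t => rogersL_ps (v t))); [|now apply is_derive_rogersL_ps_comp].
  apply (is_derive_minus (fun t => rogersL_ps t + rogersL_ps y - rogersL_ps (t * y))
           (fun t => rogersL_ps (u t))); [|now apply is_derive_rogersL_ps_comp].
  apply (is_derive_minus (fun t => rogersL_ps t + rogersL_ps y) (fun t => rogersL_ps (t * y))).
  - apply (is_derive_plus rogersL_ps (fun _ => rogersL_ps y)).
    + now apply is_derive_rogersL_ps.
    + exact (is_derive_const (rogersL_ps y) x).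
  - apply (is_derive_rogersL_ps_comp (fun t => t * y)); [nra | exact Dm].
Qed.

Lemma is_lim_seq_five_term_defect (s : nat -> R) (y : R) : 0 < y < 1 ->
  (forall n, 0 < s n <= / 2) -> is_lim_seq s 0 ->
  is_lim_seq (fun n => five_term_defect (s n) y) 0.
Proof.
  intros Hy Hs Hlim; unfold five_term_defect.
  set (u := fun t => t * (1 - y) / (1 - t * y)).
  set (v := fun t => y * (1 - t) / (1 - t * y)).
  assert (Hsmall : forall n, 0 < u (s n) <= / 2).
  { intros n; specialize (Hs n); assert (0 < 1 - s n * y) by nra; unfold u; split.
    - apply Rdiv_lt_0_compat; nra.
    - apply Rmult_le_reg_r with (1 - s n * y); auto.
      unfold Rdiv; rewrite Rmult_assoc, Rinv_l; nra. }
  replace (Finite 0) with (Finite (0 + rogersL_ps y - 0 - 0 - rogersL_ps y)) by (f_equal; ring).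
  apply is_lim_seq_minus'; [apply is_lim_seq_minus'; [apply is_lim_seq_minus'|]|].
  - apply is_lim_seq_plus'; [now apply is_lim_seq_rogersL_ps_0 | apply is_lim_seq_const].
  - apply is_lim_seq_rogersL_ps_0; [intros n; specialize (Hs n); split; nra|].
    replace (Finite 0) with (Finite (0 * y)) by (f_equal; ring).
    apply (is_lim_seq_comp_ex_derive (fun t => t * y)); [auto_derive|]; auto.
  - apply (is_lim_seq_rogersL_ps_0 (fun n => u (s n))); auto.
    replace (Finite 0) with (Finite (u 0)) by (unfold u; f_equal; field; lra).
    apply is_lim_seq_comp_ex_derive; [unfold u; auto_derive; lra | exact Hlim].
  - apply (is_lim_seq_continuous rogersL_ps (fun n => v (s n)));
      [now apply continuity_pt_rogersL_ps|].
    replace (Finite y) with (Finite (v 0)) by (unfold v; f_equal; field; lra).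
    apply is_lim_seq_comp_ex_derive; [unfold v; auto_derive; lra | exact Hlim].
Qed.

Lemma rogersL_ps_five_term (x y : R) : 0 < x < 1 -> 0 < y < 1 ->
  rogersL_ps x + rogersL_ps y
  = rogersL_ps (x * y) + rogersL_ps (x * (1 - y) / (1 - x * y))
    + rogersL_ps (y * (1 - x) / (1 - x * y)).
Proof.
  intros Hx Hy.
  set (s := fun n : nat => (/ 2) ^ S n).
  assert (Hs : forall n, 0 < s n <= / 2).
  { intros n; unfold s; simpl; pose proof (pow_gt0_le1 (/ 2) n ltac:(lra)); nra. }
  assert (Hlim : is_lim_seq s 0).
  { apply (is_lim_seq_incr_1 (fun n => (/ 2) ^ n)), is_lim_seq_geom.
    rewrite Rabs_pos_eq; lra. }
  assert (Hc : is_lim_seq (fun n => five_term_defect (s n) y) (five_term_defect x y)).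
  { apply is_lim_seq_ext with (u := fun _ => five_term_defect x y); [|apply is_lim_seq_const].
    intros n; apply (is_derive_0_eq_on_interval (fun t => five_term_defect t y) 0 1); auto.
    - intros t Ht; now apply is_derive_five_term_defect.
    - specialize (Hs n); lra. }
  assert (H0 : five_term_defect x y = 0).
  { apply Rbar_finite_eq; rewrite <- (is_lim_seq_unique _ _ Hc).
    now apply is_lim_seq_unique, is_lim_seq_five_term_defect. }
  unfold five_term_defect in H0; lra.
Qed.

Lemma rogersL_ps_reflection (a b : R) : 0 < a < 1 -> 0 < b < 1 ->
  rogersL_ps a + rogersL_ps (1 - a) = rogersL_ps b + rogersL_ps (1 - b).
Proof.
  apply (is_derive_0_eq_on_interval (fun t => rogersL_ps t + rogersL_ps (1 - t))).
  intros t Ht.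
  replace 0 with (rogersL_derive t + (-1) * rogersL_derive (1 - t))
    by (unfold rogersL_derive; replace (1 - (1 - t)) with t by ring; field; lra).
  apply (is_derive_plus rogersL_ps (fun s => rogersL_ps (1 - s))).
  - now apply is_derive_rogersL_ps.
  - apply (is_derive_rogersL_ps_comp (fun s => 1 - s)); [lra | auto_derive; auto; ring].
Qed.

Section Telescope.

Variable r : R.
Hypothesis r_01 : 0 < r < 1.

Let A (n : nat) : R := (1 - r) / (1 - r ^ S (S n)).
Let B (n : nat) : R := r ^ S n * A n.

Lemma telescope_args_bounds (n : nat) : 0 < A n < 1 /\ 0 < B n <= / 2.
Proof.
  pose proof (pow_gt0_le1 r n ltac:(lra)) as Hn; unfold B, A; simpl; set (s := r ^ n) in *.
  assert (0 < 1 - r * (r * s)) by nra.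
  split; split.
  - apply Rdiv_lt_0_compat; lra.
  - apply Rmult_lt_reg_r with (1 - r * (r * s)); auto.
    unfold Rdiv; rewrite Rmult_assoc, Rinv_l; nra.
  - apply Rmult_lt_0_compat; [nra | apply Rdiv_lt_0_compat; lra].
  - apply Rmult_le_reg_r with (1 - r * (r * s)); auto.
    replace (r * s * ((1 - r) / (1 - r * (r * s))) * (1 - r * (r * s)))
      with (r * s * (1 - r)) by (field; lra).
    nra.
Qed.

Lemma rogersL_ps_telescope_step (n : nat) :
  rogersL_ps (A n) + rogersL_ps (B n)
  = rogersL_ps (r ^ S n * A n ^ 2) + rogersL_ps (A (S n)) + rogersL_ps (B (S n)).
Proof.
  destruct (telescope_args_bounds n) as [HA HB].
  replace (r ^ S n * A n ^ 2) with (A n * B n) by (unfold B; ring).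
  rewrite (rogersL_ps_five_term (A n) (B n) HA ltac:(lra)).
  pose proof (pow_gt0_le1 r n ltac:(lra)) as Hn.
  assert (H1 : 0 < r ^ S n < 1) by (simpl; split; nra).
  assert (H2 : 0 < r ^ S (S n) < 1) by (simpl in *; split; nra).
  assert (H3 : 0 < r ^ S (S (S n)) < 1) by (simpl in *; split; nra).
  assert (D : 1 - A n * B n
              = (1 - r ^ S n) * (1 - r ^ S (S (S n))) / (1 - r ^ S (S n)) ^ 2).
  { unfold B, A; simpl in *; field; lra. }
  replace (A n * (1 - B n) / (1 - A n * B n)) with (A (S n))
    by (rewrite D; unfold B, A; simpl in *; field; repeat split; nra).
  replace (B n * (1 - A n) / (1 - A n * B n)) with (B (S n))
    by (rewrite D; unfold B, A; simpl in *; field; repeat split; nra).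
  reflexivity.
Qed.

Lemma rogersL_ps_telescope :
  infinite_sum (fun n => rogersL_ps (r ^ S n * A n ^ 2)) (rogersL_ps r).
Proof.
  set (T := fun n => rogersL_ps (A n) + rogersL_ps (B n)).
  assert (Hpartial : forall N,
            sum_f_R0 (fun n => rogersL_ps (r ^ S n * A n ^ 2)) N = T 0%nat - T (S N)).
  { unfold T; induction N; cbn [sum_f_R0].
    - rewrite (rogersL_ps_telescope_step 0); ring.
    - rewrite IHN, (rogersL_ps_telescope_step (S N)); ring. }
  assert (HT0 : T 0%nat = rogersL_ps r + rogersL_ps (1 - r)).
  { unfold T; replace (B 0%nat) with (1 - A 0%nat) by (unfold B, A; simpl; field; nra).
    apply rogersL_ps_reflection; [apply telescope_args_bounds | lra]. }
  assert (Hgeom : is_lim_seq (fun n => r ^ n) 0)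
    by (apply is_lim_seq_geom; rewrite Rabs_pos_eq; lra).
  set (a := fun t => (1 - r) / (1 - r * (r * t))).
  assert (HA : is_lim_seq A (1 - r)).
  { replace (Finite (1 - r)) with (Finite (a 0)) by (unfold a; f_equal; field).
    apply (is_lim_seq_ext (fun n => a (r ^ n))); [reflexivity|].
    apply is_lim_seq_comp_ex_derive; [unfold a; auto_derive; lra | exact Hgeom]. }
  assert (HB : is_lim_seq B 0).
  { replace (Finite 0) with (Finite (r * 0 * a 0)) by (f_equal; ring).
    apply (is_lim_seq_ext (fun n => r * r ^ n * a (r ^ n))); [reflexivity|].
    apply (is_lim_seq_comp_ex_derive (fun t => r * t * a t));
      [unfold a; auto_derive; lra | exact Hgeom]. }
  assert (HT : is_lim_seq T (rogersL_ps (1 - r) + 0)).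
  { apply is_lim_seq_plus'.
    - apply (is_lim_seq_continuous rogersL_ps A); auto.
      apply continuity_pt_rogersL_ps; lra.
    - apply is_lim_seq_rogersL_ps_0; auto; intros n; apply telescope_args_bounds. }
  apply is_lim_seq_Reals, is_lim_seq_ext with (u := fun N => T 0%nat - T (S N));
    [intros N; now rewrite Hpartial|].
  replace (Finite (rogersL_ps r)) with (Finite (T 0%nat - (rogersL_ps (1 - r) + 0)))
    by (rewrite HT0; f_equal; ring).
  apply is_lim_seq_minus'; [apply is_lim_seq_const | now apply (is_lim_seq_incr_1 T)].
Qed.

End Telescope.

(* The real analogue of [U_m (cos θ) = sin ((m + 1) θ) / sin θ], with [q] in place of [e^(iθ)]. *)
Lemma chebU_closed_form (x q : R) : q <> 0 -> q ^ 2 <> 1 -> 2 * x = q + / q ->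
  forall m, chebU m x = (/ q ^ S m - q ^ S m) / (/ q - q).
Proof.
  intros Hq0 Hq1 Hx.
  assert (Hq1' : 1 - q * q <> 0) by (simpl in Hq1; lra).
  assert (Hpair : forall m, chebU_pair m x
            = ((/ q ^ S m - q ^ S m) / (/ q - q), (/ q ^ S (S m) - q ^ S (S m)) / (/ q - q))).
  { induction m as [|m IHm]; simpl chebU_pair.
    - f_equal; [|rewrite Hx]; simpl; field; auto.
    - rewrite IHm; simpl fst; simpl snd; f_equal.
      assert (q ^ m <> 0) by (apply pow_nonzero, Hq0).
      rewrite Hx; simpl; field; auto. }
  intros m; unfold chebU; now rewrite Hpair.
Qed.

Lemma chebU_inv_sqr (x q : R) (n : nat) : 0 < q < 1 -> 2 * x = q + / q ->
  1 / chebU n x ^ 2 = (q ^ 2) ^ n * ((1 - q ^ 2) / (1 - (q ^ 2) ^ S n)) ^ 2.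
Proof.
  intros Hq Hx.
  rewrite (chebU_closed_form x q) by (simpl; nra).
  rewrite <- !pow_mult, !(Nat.mul_comm 2), !pow_mult.
  assert (0 < q ^ n <= 1) by (apply pow_gt0_le1; lra).
  simpl; set (a := q * q ^ n).
  assert (0 < a < 1) by (unfold a; split; nra).
  assert (a * a < 1 /\ q * q < 1) by (split; nra).
  unfold a in *; field; repeat split; lra.
Qed.

Theorem corollary4 (x : R) (hx : 1 < x) :
  infinite_sum (fun n => rogersL (1 / (chebU (S n) x) ^ 2))
    (rogersL (1 / (x + sqrt (x ^ 2 - 1)) ^ 2)).
Proof.
  set (s := sqrt (x ^ 2 - 1)).
  assert (Hs : 0 <= s /\ s * s = x ^ 2 - 1) by (split; [apply sqrt_pos | apply sqrt_sqrt; nra]).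
  set (q := x - s).
  assert (Hq : 0 < q < 1) by (unfold q; split; nra).
  assert (Hinv : x + s = / q)
    by (apply Rmult_eq_reg_r with q; [rewrite Rinv_l; unfold q; nra | lra]).
  assert (Hx : 2 * x = q + / q) by (rewrite <- Hinv; unfold q; ring).
  assert (Hr : 0 < q ^ 2 < 1) by (simpl; nra).
  replace (1 / (x + s) ^ 2) with (q ^ 2) by (rewrite Hinv; field; lra).
  rewrite rogersL_ps_eq by exact Hr.
  replace (fun n => rogersL (1 / chebU (S n) x ^ 2))
    with (fun n => rogersL_ps ((q ^ 2) ^ S n * ((1 - q ^ 2) / (1 - (q ^ 2) ^ S (S n))) ^ 2)).
  { now apply rogersL_ps_telescope. }
  apply functional_extensionality; intros n.
  rewrite (chebU_inv_sqr x q (S n) Hq Hx), rogersL_ps_eq; [reflexivity|].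
  destruct (telescope_args_bounds (q ^ 2) Hr n) as [HA HB].
  set (A := (1 - q ^ 2) / (1 - (q ^ 2) ^ S (S n))) in *.
  split; nra.
Qed.
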